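(* Let $\varphi$ be an Orlicz $N$-function with Young–Fenchel transform $\psi$ and let $q_\varphi$ be the generalized inverse of the density of $\varphi$. Let $\{X_{k,n},k,n\ge1\}$ be a double array of independent $\varphi$-subgaussian random variables, and let $g$ be a positive non-decreasing function with $\tau_\varphi(X_{k,n})\le g(\ln(kn))$ for all $k,n\ge1$. Set $a_{m,j}=g(\ln(mj))\psi^{-1}(\ln(mj))$, $Y_{m,j}=\max_{1\le k\le m,1\le n\le j}X_{k,n}-a_{m,j}$ and $Y^-_{m,j}=\max(-Y_{m,j},0)$. Let $\kappa$ be a positive increasing differentiable function whose derivative $r=\kappa'$ is non-decreasing on $(0,\infty)$. Assume there is $C>0$ such that for all $k,n\ge1$ and all $x>0$ $$P\left(\frac{X_{k,n}}{g(\ln(kn))}<x\right)\le\exp\left(-Ce^{-\kappa(x)}\right),$$ and that $$\psi(x)-\kappa\left(\frac{x\,g(x)}{g(0)}\right)\ge C_0(x)$$ for some function $C_0$. Suppose there exist $A,\varepsilon_0>0$ such that for every $\varepsilon\in(0,\varepsilon_0]$ $$\int_A^{+\infty}\exp\left(-\frac{Cy}{2}\exp\left(-\kappa\left(\frac{g(\ln y)}{g(0)}\psi^{-1}(\ln y)-\frac{\varepsilon}{g(\ln y)}\right)\right)\right)dy<+\infty$$ and $$\int_A^{+\infty}\psi(y)q_\varphi(y)\exp\left(\psi(y)-\frac C2\exp\left(C_0(y)+\frac{\varepsilon\, r\left(\frac{y\,g(\psi(y))}{g(0)}-\frac{\varepsilon}{g(\psi(y))}\right)}{g(\psi(y))}\right)\right)dy<+\infty.$$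 Then $\lim_{m\vee j\to\infty}Y^-_{m,j}=0$ almost surely.
   Context: An Orlicz $N$-function is a continuous even convex function $\varphi:\mathbb R\to\mathbb R$ with $\varphi(0)=0$, increasing on $(0,\infty)$, with $\varphi(x)/x\to0$ as $x\to0$ and $\varphi(x)/x\to+\infty$ as $x\to+\infty$. It can be written $\varphi(x)=\int_0^{|x|}p_\varphi(t)\,dt$ with non-decreasing density $p_\varphi$; its generalized inverse is $q_\varphi(t)=\sup\{u\ge0:p_\varphi(u)\le t\}$. The Young–Fenchel transform is $\psi(x)=\sup_{y\in\mathbb R}(xy-\varphi(y))$, with $\psi(x)=\int_0^{|x|}q_\varphi(t)dt$; $\psi^{-1}$ is the inverse of $\psi$ on $[0,\infty)$. A random variable $X$ is $\varphi$-subgaussian if $EX=0$ and there is a finite $a>0$ with $E\exp(tX)\le\exp(\varphi(at))$ for all $t$; $\tau_\varphi(X)=\inf\{a>0:E\exp(tX)\le\exp(\varphi(at))\ \forall t\}$. $\lim_{m\vee j\to\infty}b_{m,j}=b$ means: for every $\varepsilon>0$ there is $N$ with $|b_{m,j}-b|<\varepsilon$ whenever $\max(m,j)\ge N$. *)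

From HB Require Import structures.
From mathcomp Require Import all_boot all_order all_algebra.
From mathcomp Require Import all_classical all_reals all_analysis.
Set Implicit Arguments. Unset Strict Implicit. Unset Printing Implicit Defensive.
Import Order.TTheory GRing.Theory Num.Theory.
Import numFieldNormedType.Exports.
Local Open Scope classical_set_scope.
Local Open Scope ring_scope.

Definition orlicz_N {R : realType} (phi : R -> R) : Prop :=
  continuous phi /\
  (forall x, phi (- x) = phi x) /\
  (forall x y t, 0 <= t -> t <= 1 ->
      phi (t * x + (1 - t) * y) <= t * phi x + (1 - t) * phi y) /\
  phi 0 = 0 /\
  (forall x y, 0 < x -> x < y -> phi x < phi y) /\
  (fun x => phi x / x) @ 0^' --> (0 : R) /\
  (fun x => phi x / x) @ +oo --> +oo.

Definition is_density {R : realType} (phi p : R -> R) : Prop :=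
  (forall u v, 0 <= u -> u <= v -> p u <= p v) /\
  (forall x, (phi x)%:E = (\int[lebesgue_measure]_(t in `[0%R, `|x|%R]) (p t)%:E)%E).

Definition gen_inv {R : realType} (p : R -> R) (t : R) : R :=
  sup [set u | 0 <= u /\ p u <= t].

Definition young_fenchel {R : realType} (phi : R -> R) (x : R) : R :=
  sup (range (fun y => x * y - phi y)).

(* inverse of the (continuous, strictly increasing, onto [0,oo)) function
   psi on [0,oo): for x >= 0 this is the unique u >= 0 with psi u = x *)
Definition inv_on_nonneg {R : realType} (psi : R -> R) (x : R) : R :=
  sup [set u | 0 <= u /\ psi u <= x].

Section Prob.
Context {R : realType} {d : measure_display} {T : measurableType d}.
Variable P : probability T R.

Definition mgf_bound (phi : R -> R) (X : T -> R) (a : R) : Prop :=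
  forall t, (\int[P]_w (expR (t * X w))%:E <= (expR (phi (a * t)))%:E)%E.

Definition phi_subgaussian (phi : R -> R) (X : T -> R) : Prop :=
  ('E_P[X] = 0)%E /\ exists a, 0 < a /\ mgf_bound phi X a.

Definition tau_phi (phi : R -> R) (X : T -> R) : R :=
  inf [set a | 0 < a /\ mgf_bound phi X a].

Definition mutually_independent (I : eqType) (S : set I) (Y : I -> T -> R) :
  Prop :=
  forall (s : seq I) (B : I -> set R),
    uniq s -> (forall i, i \in s -> S i) -> (forall i, measurable (B i)) ->
    P (\bigcap_(i in [set` s]) (Y i @^-1` B i)) =
    (\prod_(i <- s) P (Y i @^-1` B i))%E.
End Prob.

Definition lim_max_to {R : realType} (b : nat -> nat -> R) (l : R) : Prop :=
  forall e, 0 < e -> exists N : nat, forall m j, (0 < m)%N -> (0 < j)%N ->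
    (N <= maxn m j)%N -> `|b m j - l| < e.

Definition max_array {R : realType} (x : nat -> nat -> R) (m j : nat) : R :=
  \big[Num.max/x 1%N 1%N]_(1 <= k < m.+1) \big[Num.max/x 1%N 1%N]_(1 <= n < j.+1) x k n.

(* The claim [Y^-_{m,j} -> 0] says that the maximum is eventually at least
   [a_{m,j} - eps]; it needs only the first integrability condition.  Fix [eps > 0], put [N = m j] and
   [s(y) = exp (- kappa (g(ln y)/g(0) psi^-1(ln y) - eps/g(ln y)))].
   By independence and the lower tail bound, all [X_{k,n}], [k <= m], [n <= j],
   lie below [a_{m,j} - eps] with probability at most [exp (- C N s(N))].
   Since [s] is eventually nonincreasing, integrability of [exp (- C y s(y)/2)]
   makes this [O(N^(-3/2)) = O(m^(-3/2) j^(-3/2))], which is summable over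
   [max(m, j) >= M] with sum tending to [0]; a Borel-Cantelli argument then
   gives the bound almost surely, and [eps] runs through [eps0 / (k + 1)]. *)

From HB Require Import structures.
From mathcomp Require Import all_boot all_order all_algebra.
From mathcomp Require Import all_classical all_reals all_analysis.
From mathcomp Require Import ring lra.
Import Order.TTheory GRing.Theory Num.Theory.
Import numFieldNormedType.Exports.
Local Open Scope classical_set_scope.
Local Open Scope ring_scope.
Set Implicit Arguments. Unset Strict Implicit. Unset Printing Implicit Defensive.

Section inv_on_nonneg.
Context {R : realType} {psi : R -> R} {c : R}.
Hypothesis psi0_le0 : psi 0 <= 0.
Hypothesis psi_ge : forall u, u - c <= psi u.

Let sublevel v := [set u | 0 <= u /\ psi u <= v].

Let has_sup_sublevel v : 0 <= v -> has_sup (sublevel v).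
Proof.
move=> v0; split; first by exists 0; split => //; apply: le_trans psi0_le0 v0.
by exists (v + c) => u [_ ?]; have := psi_ge u; lra.
Qed.

Lemma le_inv_on_nonneg u v : 0 <= u -> psi u <= v -> 0 <= v ->
  u <= inv_on_nonneg psi v.
Proof. by move=> u0 uv v0; apply: (sup_upper_bound (has_sup_sublevel v0)). Qed.

Lemma inv_on_nonneg_ge0 v : 0 <= v -> 0 <= inv_on_nonneg psi v.
Proof. by move=> v0; apply: le_inv_on_nonneg => //; exact: le_trans psi0_le0 v0. Qed.

Lemma inv_on_nonneg_le v v' : 0 <= v -> v <= v' ->
  inv_on_nonneg psi v <= inv_on_nonneg psi v'.
Proof.
move=> v0 vv'; apply: sup_le; last exact: has_sup_sublevel (le_trans v0 vv').
- by move=> u [u0 uv]; apply/le_down; split => //; lra.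
- by exists 0; split => //; exact: le_trans psi0_le0 v0.
Qed.

End inv_on_nonneg.

Section young_fenchel.
Context {R : realType} {phi : R -> R}.
Hypothesis phiN : orlicz_N phi.

Lemma orlicz_N_ge0 y : 0 <= phi y.
Proof.
case: phiN => _ [phiN_even [phiN_convex [phi0 _]]].
have := phiN_convex y (- y) (1 / 2) ltac:(lra) ltac:(lra).
have -> : 1 / 2 * y + (1 - 1 / 2) * - y = 0 by lra.
by rewrite phiN_even phi0; lra.
Qed.

(* Superlinearity of [phi] makes [x y - phi y] negative for large [|y|]. *)
Lemma young_fenchel_has_ubound x : has_ubound (range (fun y => x * y - phi y)).
Proof.
case: phiN => [_ [phiN_even [_ [_ [_ [_ phi_superlinear]]]]]].
have /cvgryPge /(_ (`|x| + 1)) [M [_ HM]] := phi_superlinear.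
pose M' := Num.max M 1.
have M'1 : 1 <= M' by rewrite le_max lexx orbT.
have MM' : M <= M' by rewrite le_max lexx.
have phi_big z : M' < z -> `|x| * z <= phi z.
  move=> zM; have z0 : 0 < z by lra.
  have := HM z (le_lt_trans MM' zM); rewrite ler_pdivlMr // => hz; nra.
exists (`|x| * M') => _ [y _ <-].
have xy : x * y <= `|x| * `|y| by rewrite -normrM ler_norm.
have := orlicz_N_ge0 y.
have phi_norm : phi `|y| = phi y.
  by have [/ler0_norm ->|/gtr0_norm ->] := leP y 0; rewrite ?phiN_even.
have [yM|yM] := ltP M' `|y|.
  by have := phi_big _ yM; rewrite phi_norm; have := normr_ge0 x; nra.
by have := normr_ge0 x; nra.
Qed.

Lemma young_fenchel_ge x y : x * y - phi y <= young_fenchel phi x.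
Proof. by apply: ub_le_sup; [exact: young_fenchel_has_ubound | exists y]. Qed.

Lemma young_fenchel0_le0 : young_fenchel phi 0 <= 0.
Proof.
apply: ge_sup; first by exists (0 * 0 - phi 0), 0.
by move=> _ [y _ <-]; have := orlicz_N_ge0 y; lra.
Qed.

Lemma young_fenchel_ge_id u : u - phi 1 <= young_fenchel phi u.
Proof. by have := young_fenchel_ge u 1; rewrite mulr1. Qed.

End young_fenchel.

Section inv_pow32.
Context {R : realType}.

(* [n^(-3/2)]; at [n = 0] it is [0], since [0^-1 = 0]. *)
Definition inv_pow32 (n : nat) : R := (n%:R * Num.sqrt n%:R)^-1.

Lemma inv_pow32_ge0 n : 0 <= inv_pow32 n.
Proof. by rewrite invr_ge0 mulr_ge0 ?sqrtr_ge0. Qed.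

Lemma inv_pow32M m n : inv_pow32 (m * n) = inv_pow32 m * inv_pow32 n.
Proof. by rewrite /inv_pow32 natrM sqrtrM ?ler0n // mulrACA invfM. Qed.

Lemma inv_pow32S_le n : (0 < n)%N ->
  inv_pow32 n.+1 <= 2 * ((Num.sqrt n%:R)^-1 - (Num.sqrt n.+1%:R)^-1).
Proof.
move=> n0; rewrite /inv_pow32.
set a := Num.sqrt n%:R; set b := Num.sqrt n.+1%:R.
have a0 : 0 < a by rewrite sqrtr_gt0 ltr0n.
have b0 : 0 < b by rewrite sqrtr_gt0 ltr0n.
have ab : a <= b by rewrite ler_sqrt // ler_nat.
have -> : n.+1%:R = b ^+ 2 by rewrite sqr_sqrtr.
have diff_eq : (a^-1 - b^-1) * (a * b * (a + b)) = 1.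
  have -> : (a^-1 - b^-1) * (a * b * (a + b)) = b ^+ 2 - a ^+ 2.
    by field; rewrite !gt_eqF.
  by rewrite !sqr_sqrtr ?ler0n // -natrB // subSnn.
have b3 : 0 < b ^+ 2 * b by rewrite mulr_gt0 ?exprn_gt0.
rewrite -(div1r (b ^+ 2 * b)) ler_pdivrMr //.
have : a * b * (a + b) <= 2 * (b ^+ 2 * b).
  rewrite (_ : 2 * _ = b * b * (2 * b)); last by ring.
  by apply: ler_pM; nra.
have : 0 < a^-1 - b^-1 by rewrite subr_gt0 ltf_pV2 // ltr_sqrt ?ltr0n // ltr_nat.
move: diff_eq; set t := a^-1 - b^-1; set x := a * b * (a + b); set y := b ^+ 2 * b.
nra.
Qed.

Lemma sum_inv_pow32_le M k : (0 < M)%N ->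
  \sum_(0 <= a < k) inv_pow32 (M + a)%N <= 3 * (Num.sqrt M%:R)^-1.
Proof.
move=> M0; have sqrtM0 : 0 < Num.sqrt M%:R :> R by rewrite sqrtr_gt0 ltr0n.
have telescope l : \sum_(0 <= a < l.+1) inv_pow32 (M + a)%N + 2 * (Num.sqrt (M + l)%N%:R)^-1
    <= inv_pow32 M + 2 * (Num.sqrt M%:R)^-1.
  elim: l => [|l IH]; first by rewrite big_nat1 !addn0.
  rewrite big_nat_recr //= addnS.
  by have := inv_pow32S_le (ltn_addr l M0); lra.
have first_le : inv_pow32 M <= (Num.sqrt M%:R)^-1.
  by rewrite /inv_pow32 invfM ler_piMl ?invr_ge0 ?sqrtr_ge0 // invf_le1 ?ltr0n // ler1n.
case: k => [|k]; first by rewrite big_geq // mulr_ge0 // invr_ge0 ltW.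
have := telescope k.
have : 0 <= 2 * (Num.sqrt (M + k)%N%:R)^-1 :> R by rewrite mulr_ge0 // invr_ge0 sqrtr_ge0.
lra.
Qed.

End inv_pow32.

Section series_measure.
Context {R : realType}.
Local Open Scope ereal_scope.

Lemma nneseries_le (u : nat -> \bar R) (B : \bar R) : (forall n, 0 <= u n) ->
  (forall k, \sum_(0 <= i < k) u i <= B) -> \sum_(0 <= i <oo) u i <= B.
Proof.
move=> u0 uB; apply: lime_le; first exact: is_cvg_nneseries.
by near=> n; exact: uB.
Unshelve. all: by end_near.
Qed.

Lemma measure_bigcup2_le d (T : measurableType d) (mu : {measure set T -> \bar R})
    (E : nat -> nat -> set T) (u v : nat -> R) (U V : R) :
  (forall a b, measurable (E a b)) -> (forall a, (0 <= u a)%R) ->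
  (forall a b, mu (E a b) <= (u a * v b)%:E) ->
  (forall k, (\sum_(0 <= a < k) u a <= U)%R) ->
  (forall k, (\sum_(0 <= b < k) v b <= V)%R) ->
  mu (\bigcup_a \bigcup_b E a b) <= (U * V)%:E.
Proof.
move=> mE u0 muE sumU sumV.
have V0 : (0 <= V)%R by have := sumV 0%N; rewrite big_geq.
have mEa a : measurable (\bigcup_b E a b) by exact: bigcupT_measurable.
apply: (le_trans (measure_sigma_subadditive mu mEa (bigcupT_measurable _ mEa) (fun _ w => w))).
apply: (nneseries_le (u := fun a => mu (\bigcup_b E a b))) => [a|k]; first exact: measure_ge0.
apply: (@le_trans _ _ (\sum_(0 <= a < k) (u a * V)%:E)); last first.
  by rewrite sumEFin lee_fin -mulr_suml ler_wpM2r.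
apply: lee_sum => a _.
apply: (le_trans (measure_sigma_subadditive mu (mE a) (mEa a) (fun _ w => w))).
apply: (nneseries_le (u := fun b => mu (E a b))) => [b|l]; first exact: measure_ge0.
apply: (le_trans (lee_sum _ (fun b _ => muE a b))).
by rewrite sumEFin lee_fin -mulr_sumr ler_wpM2l.
Qed.

End series_measure.

Section integrable_decay.
Context {R : realType}.
Local Notation mu := (@lebesgue_measure R).

Lemma ge0_integrable_rect_bound (A : R) (f : R -> R) :
  (forall y, A <= y -> 0 <= f y) ->
  mu.-integrable `[A, +oo[ (fun y => (f y)%:E) ->
  exists I : R, forall lo hi c, A <= lo -> lo <= hi -> 0 <= c ->
    (forall y, lo <= y -> y <= hi -> c <= f y) -> c * (hi - lo) <= I.
Proof.
move=> f0 integrable_f.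
have mf := measurable_int _ integrable_f.
set J := (\int[mu]_(y in `[A, +oo[) (f y)%:E)%E.
have Jfin : J \is a fin_num by exact: integrable_fin_num.
exists (fine J) => lo hi c Alo lohi c0 fc.
have sub : `[lo, hi]%classic `<=` `[A, +oo[%classic.
  by move=> y; rewrite /= !in_itv /= andbT => /andP[ly _]; lra.
rewrite -lee_fin fineK //.
apply: (@le_trans _ _ (\int[mu]_(y in `[lo, hi]) (f y)%:E)%E); last first.
  by apply: ge0_subset_integral => // y; rewrite /= in_itv /= andbT lee_fin => /f0.
apply: (@le_trans _ _ (\int[mu]_(y in `[lo, hi]) (cst c%:E) y)%E).
  rewrite integral_cst // [X in (_ <= _ * X)%E](_ : _ = (hi - lo)%:E) ?EFinM //.
  apply: (eq_trans (lebesgue_measure_itv `[lo, hi])); rewrite /= lte_fin -EFinB.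
  have [//|hilo] := ltP lo hi; suff -> : hi = lo by rewrite subrr.
  by apply/le_anti; rewrite hilo lohi.
apply: ge0_le_integral => //; first exact: measurable_funS mf.
by move=> y; rewrite /= in_itv /= => /andP[ly yh]; rewrite lee_fin fc.
Qed.

(* On [[y, 4y/3]] the integrand is at least [v := expR (- (2/3) c y s y)], so
   integrability gives [v = O(1/y)]; the bound claimed is [v^(3/2)]. *)
Lemma integrable_decay (A y0 c : R) (s : R -> R) : 0 < c ->
  (forall y, y0 <= y -> 0 <= s y) ->
  (forall y y', y0 <= y -> y <= y' -> s y' <= s y) ->
  mu.-integrable `[A, +oo[ (fun y => (expR (- (c * y / 2 * s y)))%:E) ->
  exists K, forall y, Num.max A y0 <= y -> 0 < y ->
    expR (- (c * y * s y)) <= K * (y * Num.sqrt y)^-1.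
Proof.
move=> c0 s0 s_nonincr integrable_f.
have [I rect_le] := ge0_integrable_rect_bound (fun y _ => ltW (expR_gt0 _)) integrable_f.
have I0 : 0 <= I by have := rect_le A A 0 (lexx A) (lexx A) (lexx 0); rewrite mul0r; apply.
exists (3 * I * Num.sqrt (3 * I)) => y; rewrite ge_max => /andP[Ay y0y] y_gt0.
set v := expR (- (2 / 3 * c * y * s y)).
have v_le : v <= 3 * I / y.
  have box : v * (4 / 3 * y - y) <= I.
    apply: rect_le => //; [lra | exact: ltW (expR_gt0 _) |].
    move=> t yt ty; rewrite ler_expR lerN2.
    have ts : t * s t <= 4 / 3 * y * s y.
      have := s0 _ (le_trans y0y yt); have := s_nonincr _ _ y0y yt; nra.
    nra.
  by rewrite ler_pdivlMr //; nra.
set w := expR (- (1 / 3 * c * y * s y)).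
have vw : expR (- (c * y * s y)) = v * w by rewrite -expRD; congr expR; lra.
have w_le : w <= Num.sqrt (3 * I) * (Num.sqrt y)^-1.
  have wv : w ^+ 2 = v by rewrite -expRM_natl; congr expR; lra.
  have -> : w = Num.sqrt v by rewrite -wv sqrtr_sqr ger0_norm // ltW ?expR_gt0.
  rewrite -(sqrtrV (ltW y_gt0)) -sqrtrM ?mulr_ge0 //; exact: ler_wsqrtr.
rewrite vw (_ : _ * _^-1 = (3 * I / y) * (Num.sqrt (3 * I) * (Num.sqrt y)^-1)).
  by apply: ler_pM => //; [exact: ltW (expR_gt0 _) | exact: ltW (expR_gt0 _)].
by rewrite invfM; ring.
Qed.

End integrable_decay.

Section double_array.
Context {R : realType}.

Definition rect (m j : nat) : seq (nat * nat) :=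
  [seq (k, n) | k <- iota 1 m, n <- iota 1 j].

Lemma rect_uniq m j : uniq (rect m j).
Proof. by apply: allpairs_uniq; rewrite ?iota_uniq // => -[? ?] [? ?] _ _. Qed.

Lemma size_rect m j : size (rect m j) = (m * j)%N.
Proof. by rewrite size_allpairs !size_iota. Qed.

Lemma mem_rect m j k n :
  ((k, n) \in rect m j) = (0 < k <= m)%N && (0 < n <= j)%N.
Proof.
apply/allpairsP/andP => [[[k' n'] /= [+ + [-> ->]]]|[km nj]].
  by rewrite !mem_iota !add1n !ltnS.
by exists (k, n); rewrite !mem_iota !add1n !ltnS.
Qed.

Lemma le_max_array (x : nat -> nat -> R) m j k n :
  (0 < k <= m)%N -> (0 < n <= j)%N -> x k n <= max_array x m j.
Proof.
move=> km nj; apply: (bigmax_sup_seq _ k) => //.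
  by rewrite mem_index_iota ltnS.
apply: (bigmax_sup_seq _ n) => //.
by rewrite mem_index_iota ltnS.
Qed.

End double_array.

Section independence.
Context {R : realType} {d : measure_display} {T : measurableType d}.
Local Open Scope ereal_scope.

Lemma prode_le_pow (I : eqType) (s : seq I) (F : I -> \bar R) (e : R) :
  (forall i, i \in s -> 0 <= F i <= e%:E) -> \prod_(i <- s) F i <= (e ^+ size s)%:E.
Proof.
elim: s => [|a s IH] F0e; first by rewrite big_nil expr0.
have /andP[Fa0 Fae] := F0e a (mem_head a s).
have F0e' i : i \in s -> 0 <= F i <= e%:E by move=> si; rewrite F0e // in_cons si orbT.
rewrite big_cons exprS EFinM; apply: lee_pmul => //; last exact: IH.
by rewrite big_seq prode_ge0 // => i /F0e' /andP[].
Qed.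

Lemma mutually_independent_bigcap_le (P : probability T R) (I : eqType)
    (S : set I) (Y : I -> T -> R) (s : seq I) (B : I -> set R) (e : R) :
  mutually_independent P S Y -> uniq s -> (forall i, i \in s -> S i) ->
  (forall i, measurable (B i)) -> (forall i, i \in s -> P (Y i @^-1` B i) <= e%:E) ->
  P (\bigcap_(i in [set` s]) (Y i @^-1` B i)) <= (e ^+ size s)%:E.
Proof.
move=> indep s_uniq sS mB PYB; rewrite indep //.
by apply: prode_le_pow => i si; rewrite measure_ge0 PYB.
Qed.

End independence.

Section double_array_borel_cantelli.
Context {R : realType} {d : measure_display} {T : measurableType d}.
Variables (mu : {measure set T -> \bar R}) (D : nat -> nat -> set T) (K : R) (N0 : nat).
Hypothesis mD : forall m j, measurable (D m j).
Hypothesis muD : forall m j, (0 < m)%N -> (0 < j)%N -> (N0 <= maxn m j)%N ->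
  (mu (D m j) <= (K * (inv_pow32 m * inv_pow32 j))%:E)%E.

Let K_ge0 : 0 <= K.
Proof.
have := muD (ltn0Sn N0) (ltn0Sn N0); rewrite maxnn => /(_ (leqnSn N0)).
have pos : 0 < inv_pow32 N0.+1 * inv_pow32 N0.+1 :> R.
  by rewrite mulr_gt0 // invr_gt0 mulr_gt0 ?sqrtr_gt0 ?ltr0n.
by move/(le_trans (measure_ge0 mu _)); rewrite lee_fin pmulr_lge0.
Qed.

Let measurable_bigcup2 (E : nat -> nat -> set T) :
  (forall a b, measurable (E a b)) -> measurable (\bigcup_a \bigcup_b E a b).
Proof. by move=> mE; apply: bigcupT_measurable => a; exact: bigcupT_measurable. Qed.

(* Every [D m j] with [0 < m, j] and [M <= maxn m j] lies in [tail M]. *)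
Let tail M := (\bigcup_a \bigcup_b D (M + a)%N (1 + b)%N) `|`
              (\bigcup_a \bigcup_b D (1 + a)%N (M + b)%N).

Let measurable_tail M : measurable (tail M).
Proof. by apply: measurableU; exact: measurable_bigcup2. Qed.

Let tail_le M : (0 < M)%N -> (N0 <= M)%N ->
  (mu (tail M) <= (18 * K * (Num.sqrt M%:R)^-1)%:E)%E.
Proof.
move=> M0 N0M; pose r : R := 3 * (Num.sqrt M%:R)^-1.
have sum_shift k : \sum_(0 <= a < k) inv_pow32 (M + a)%N <= r by exact: sum_inv_pow32_le.
have sum_le3 k : \sum_(0 <= a < k) K * inv_pow32 (1 + a)%N <= 3 * K.
  rewrite -mulr_sumr mulrC ler_wpM2r //.
  by have := @sum_inv_pow32_le R 1 k isT; rewrite sqrtr1 invr1 mulr1.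
apply: le_trans (measureU2 _ (measurable_bigcup2 _) (measurable_bigcup2 _)) _ => //.
rewrite (_ : 18 * K * _ = r * (3 * K) + 3 * K * r); last by rewrite /r; ring.
rewrite EFinD; apply: leeD.
- apply: (measure_bigcup2_le (u := fun a => inv_pow32 (M + a)%N)
                             (v := fun b => K * inv_pow32 (1 + b)%N)) => //.
  + by move=> a; exact: inv_pow32_ge0.
  + move=> a b; rewrite mulrCA; apply: muD; rewrite ?addn_gt0 ?M0 //.
    by rewrite (leq_trans N0M) // leq_max leq_addr.
- apply: (measure_bigcup2_le (u := fun a => K * inv_pow32 (1 + a)%N)
                             (v := fun b => inv_pow32 (M + b)%N)) => //.
  + by move=> a; rewrite mulr_ge0 // inv_pow32_ge0.
  + move=> a b; rewrite -mulrA; apply: muD; rewrite ?addn_gt0 ?M0 ?orbT //.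
    by rewrite (leq_trans N0M) // leq_max leq_addr orbT.
Qed.

Let measure_bigcap_tail : mu (\bigcap_M tail M) = 0.
Proof.
apply/eqP; rewrite eq_le measure_ge0 andbT; apply/lee_addgt0Pr => e e0.
rewrite add0e; set q := 18 * K / e.
pose M := maxn (maxn N0 1) (Num.truncn (q ^+ 2)).+1.
have M0 : (0 < M)%N by rewrite !leq_max ltnS leq0n !orbT.
have sqrtM0 : 0 < Num.sqrt M%:R :> R by rewrite sqrtr_gt0 ltr0n.
have q_le : q <= Num.sqrt M%:R.
  have /andP[_ lt_truncn] := truncn_itv (sqr_ge0 q).
  rewrite (le_trans (ler_norm q)) // -sqrtr_sqr ler_wsqrtr // ltW //.
  by rewrite (lt_le_trans lt_truncn) // ler_nat leq_maxr.
apply: le_trans (le_measure _ _ _ _) (le_trans (tail_le M0 _) _).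
- by rewrite inE; exact: bigcapT_measurable.
- by rewrite inE.
- by move=> w; apply.
- by rewrite !leq_max leqnn.
- by rewrite lee_fin ler_pdivrMr // (mulrC e) -ler_pdivrMr.
Qed.

Lemma double_array_borel_cantelli :
  {ae mu, forall w, exists M, forall m j, (0 < m)%N -> (0 < j)%N ->
     (M <= maxn m j)%N -> ~ D m j w}.
Proof.
exists (\bigcap_M tail M); split => //; first exact: bigcapT_measurable.
move=> w /= noM M _; apply: contrapT => notail; apply: noM.
exists M => m j m0 j0 Mmj Dmj; apply: notail.
have [Mm|mM] := leqP M m.
  by left; exists (m - M)%N => //; exists j.-1 => //; rewrite subnKC // add1n prednK.
have Mj : (M <= j)%N by move: Mmj; rewrite leq_max leqNgt mM.
by right; exists m.-1 => //; exists (j - M)%N => //; rewrite add1n prednK // subnKC.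
Qed.

End double_array_borel_cantelli.

Section lower_bound.
Context {R : realType} {d : measure_display} {Omega : measurableType d}
  {P : probability Omega R} {phi : R -> R} {X : nat -> nat -> {RV P >-> R}}
  {g kappa : R -> R} {C : R}.
Hypothesis phiN : orlicz_N phi.
Hypothesis X_indep : mutually_independent P
  [set kn : nat * nat | (0 < kn.1)%N /\ (0 < kn.2)%N] (fun kn => X kn.1 kn.2 : Omega -> R).
Hypothesis g_gt0 : forall x, 0 <= x -> 0 < g x.
Hypothesis g_nondecr : forall x y, 0 <= x -> x <= y -> g x <= g y.
Hypothesis kappa_incr : forall x y, 0 < x -> x < y -> kappa x < kappa y.
Hypothesis C_gt0 : 0 < C.
Hypothesis X_lower_tail : forall k n, (0 < k)%N -> (0 < n)%N -> forall x, 0 < x ->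
  (P [set w | (X k n w / g (ln (k * n)%:R) < x)%R] <= (expR (- (C * expR (- kappa x))))%:E)%E.

Local Notation psi_inv := (inv_on_nonneg (young_fenchel phi)).

Let psi_inv_ge0 v : 0 <= v -> 0 <= psi_inv v.
Proof.
by move=> v0; apply: (inv_on_nonneg_ge0 (young_fenchel0_le0 phiN) (young_fenchel_ge_id phiN)).
Qed.

Let psi_inv_le v v' : 0 <= v -> v <= v' -> psi_inv v <= psi_inv v'.
Proof.
by move=> v0 vv'; apply: (inv_on_nonneg_le (young_fenchel0_le0 phiN) (young_fenchel_ge_id phiN)).
Qed.

Let kappa_le x y : 0 < x -> x <= y -> kappa x <= kappa y.
Proof. by move=> x0; rewrite le_eqVlt => /predU1P[->//|/(kappa_incr x0)/ltW]. Qed.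

Let g0_gt0 : 0 < g 0. Proof. exact: g_gt0. Qed.

Let g0_le_g y : 1 <= y -> g 0 <= g (ln y).
Proof. by move=> y1; apply: g_nondecr => //; exact: ln_ge0. Qed.

Definition level (N : nat) : R := g (ln N%:R) * psi_inv (ln N%:R).

Definition threshold (eps y : R) : R := g (ln y) / g 0 * psi_inv (ln y) - eps / g (ln y).

Definition all_below (eps : R) (m j : nat) : set Omega :=
  \bigcap_(i in [set` rect m j]) (X i.1 i.2 @^-1` `]-oo, level (m * j) - eps[).

Lemma threshold_le eps y y' : 0 <= eps -> 1 <= y -> y <= y' ->
  threshold eps y <= threshold eps y'.
Proof.
move=> eps0 y1 yy'.
have lny0 : 0 <= ln y by exact: ln_ge0.
have lnyy' : ln y <= ln y' by rewrite ler_ln // posrE; lra.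
have gyy' : g (ln y) <= g (ln y') by exact: g_nondecr.
have gy0 : 0 < g (ln y) by exact: g_gt0.
apply: lerB.
  apply: ler_pM; [by rewrite divr_ge0 ?ltW | exact: psi_inv_ge0 | | exact: psi_inv_le].
  by rewrite ler_pM2r ?invr_gt0.
by rewrite ler_wpM2l // lef_pV2 ?posrE // (lt_le_trans gy0).
Qed.

Lemma threshold_gt0 eps y : 0 <= eps -> 1 <= y -> eps / g 0 < psi_inv (ln y) ->
  0 < threshold eps y.
Proof.
move=> eps0 y1 eps_lt; rewrite /threshold subr_gt0.
have gy := g0_le_g y1.
have I0 : 0 <= psi_inv (ln y).
  by apply: le_trans (ltW eps_lt); exact: divr_ge0 eps0 (ltW g0_gt0).
have eps_le : eps / g (ln y) <= eps / g 0.
  by rewrite ler_wpM2l // lef_pV2 ?posrE // (lt_le_trans g0_gt0).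
have I_le : psi_inv (ln y) <= g (ln y) / g 0 * psi_inv (ln y).
  by rewrite ler_peMl // ler_pdivlMr // mul1r.
lra.
Qed.

Lemma lt_threshold eps k n m j x : 0 <= eps ->
  (0 < k <= m)%N -> (0 < n <= j)%N -> eps / g 0 < psi_inv (ln (m * j)%:R) ->
  x < level (m * j) - eps -> x / g (ln (k * n)%:R) < threshold eps (m * j)%:R.
Proof.
move=> eps0 /andP[k0 km] /andP[n0 nj] eps_lt x_lt.
have kn1 : 1 <= (k * n)%:R :> R by rewrite ler1n muln_gt0 k0 n0.
have mj1 : 1 <= (m * j)%:R :> R by rewrite ler1n muln_gt0 (leq_trans k0 km) (leq_trans n0 nj).
rewrite /level /threshold in x_lt *.
have g0_gkn := g0_le_g kn1; have g0_gmj := g0_le_g mj1.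
set gkn := g (ln (k * n)%:R) in g0_gkn *; set G := g (ln (m * j)%:R) in x_lt g0_gmj *.
set I := psi_inv _ in eps_lt x_lt *.
have eps_le : eps <= G * I.
  rewrite -(divfK (lt0r_neq0 g0_gt0) eps) mulrC.
  apply: ler_pM => //; [exact: ltW | exact: divr_ge0 eps0 (ltW g0_gt0) | exact: ltW].
have gkn_gt0 : 0 < gkn := lt_le_trans g0_gt0 g0_gkn.
have G_gt0 : 0 < G := lt_le_trans g0_gt0 g0_gmj.
have div_gkn : x / gkn < (G * I - eps) / gkn by rewrite ltr_pM2r ?invr_gt0.
have gkn_g0 : (G * I - eps) / gkn <= (G * I - eps) / g 0.
  by rewrite ler_wpM2l ?subr_ge0 // lef_pV2.
have div_g0 : (G * I - eps) / g 0 = G / g 0 * I - eps / g 0 by rewrite mulrBl mulrAC.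
have eps_G : eps / G <= eps / g 0 by rewrite ler_wpM2l // lef_pV2.
lra.
Qed.

Lemma below_level_prob_le eps k n m j : 0 <= eps ->
  (0 < k <= m)%N -> (0 < n <= j)%N -> eps / g 0 < psi_inv (ln (m * j)%:R) ->
  (P (X k n @^-1` `]-oo, (level (m * j) - eps)%R[)
    <= (expR (- (C * expR (- kappa (threshold eps (m * j)%:R)))))%:E)%E.
Proof.
move=> eps0 km nj eps_lt; have /andP[k0 _] := km; have /andP[n0 _] := nj.
have mj1 : 1 <= (m * j)%:R :> R.
  by rewrite ler1n muln_gt0 (leq_trans k0 (proj2 (andP km))) (leq_trans n0 (proj2 (andP nj))).
have th_gt0 := threshold_gt0 eps0 mj1 eps_lt.
apply: le_trans (X_lower_tail k0 n0 th_gt0).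
set gkn := g (ln (k * n)%:R).
have gkn_gt0 : 0 < gkn by apply/g_gt0/ln_ge0; rewrite ler1n muln_gt0 k0.
have -> : [set w | (X k n w / gkn < threshold eps (m * j)%:R)%R] =
    X k n @^-1` `]-oo, threshold eps (m * j)%:R * gkn[.
  by apply/seteqP; split => w /=; rewrite in_itv /= ltr_pdivrMr.
apply: le_measure; rewrite ?inE; try exact: measurable_funPTI (measurable_itv _).
move=> w /=; rewrite !in_itv /= -ltr_pdivrMr //.
exact: lt_threshold.
Qed.

Lemma all_below_prob_le eps m j : 0 <= eps -> (0 < m)%N -> (0 < j)%N ->
  eps / g 0 < psi_inv (ln (m * j)%:R) ->
  (P (all_below eps m j)
    <= (expR (- (C * (m * j)%:R * expR (- kappa (threshold eps (m * j)%:R)))))%:E)%E.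
Proof.
move=> eps0 m0 j0 eps_lt.
apply: le_trans (mutually_independent_bigcap_le X_indep (rect_uniq m j) _ _ _) _.
- by move=> [k n]; rewrite mem_rect /= => /andP[/andP[]] + _ /andP[].
- by move=> _; exact: measurable_itv.
- by move=> [k n]; rewrite mem_rect => /andP[km nj]; exact: below_level_prob_le.
by rewrite size_rect -expRM_natl mulrN mulrCA mulrA.
Qed.

Lemma all_below_prob_decay eps A : 0 < eps ->
  lebesgue_measure.-integrable `[A, +oo[
    (fun y => (expR (- (C * y / 2 * expR (- kappa (threshold eps y)))))%:E) ->
  exists K N0, forall m j, (0 < m)%N -> (0 < j)%N -> (N0 <= maxn m j)%N ->
    (P (all_below eps m j) <= (K * (inv_pow32 m * inv_pow32 j))%:E)%E.
Proof.
move=> eps_gt0 integrable_eps; have eps0 := ltW eps_gt0.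
pose U := eps / g 0 + 1; have U0 : 0 <= U by rewrite addr_ge0 // divr_ge0 // ltW.
pose y0 := expR (Num.max (young_fenchel phi U) 0).
have y0_ge1 : 1 <= y0.
  by apply: le_trans (expR_ge1Dx _); rewrite lerDl le_max lexx orbT.
have U_le y : y0 <= y -> U <= psi_inv (ln y).
  move=> y0y; have lny : Num.max (young_fenchel phi U) 0 <= ln y.
    have y_gt0 : 0 < y := lt_le_trans (expR_gt0 _) y0y.
    by rewrite -[X in X <= _]expRK ler_ln ?posrE ?expR_gt0.
  apply: (le_inv_on_nonneg (young_fenchel0_le0 phiN) (young_fenchel_ge_id phiN)) => //.
    by apply: le_trans lny; rewrite le_max lexx.
  by apply: le_trans lny; rewrite le_max lexx orbT.
have eps_lt y : y0 <= y -> eps / g 0 < psi_inv (ln y).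
  by move=> /U_le; apply: lt_le_trans; rewrite ltrDl.
have nonincr y y' : y0 <= y -> y <= y' ->
    expR (- kappa (threshold eps y')) <= expR (- kappa (threshold eps y)).
  move=> y0y yy'; rewrite ler_expR lerN2; apply: kappa_le.
    exact: threshold_gt0 (le_trans y0_ge1 y0y) (eps_lt y y0y).
  exact: threshold_le (le_trans y0_ge1 y0y) yy'.
have [K decay] :=
  integrable_decay C_gt0 (fun y _ => ltW (expR_gt0 _)) nonincr integrable_eps.
have max_ge0 : 0 <= Num.max A y0 by rewrite le_max (le_trans ler01 y0_ge1) orbT.
exists K, (Num.truncn (Num.max A y0)).+1 => m j m0 j0 N0mj.
have mj_ge : Num.max A y0 <= (m * j)%:R.
  have /andP[_ lt_truncn] := truncn_itv max_ge0.
  apply/ltW/(lt_le_trans lt_truncn).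
  by rewrite ler_nat (leq_trans N0mj) // geq_max leq_pmulr // leq_pmull.
have eps_mj : eps / g 0 < psi_inv (ln (m * j)%:R).
  by apply: eps_lt; apply: le_trans mj_ge; rewrite le_max lexx orbT.
apply: le_trans (all_below_prob_le eps0 m0 j0 eps_mj) _.
rewrite lee_fin -inv_pow32M; apply: decay => //.
by rewrite ltr0n muln_gt0 m0.
Qed.

Lemma ae_level_sub_le_max_array eps A : 0 < eps ->
  lebesgue_measure.-integrable `[A, +oo[
    (fun y => (expR (- (C * y / 2 * expR (- kappa (threshold eps y)))))%:E) ->
  {ae P, forall w, exists M, forall m j, (0 < m)%N -> (0 < j)%N -> (M <= maxn m j)%N ->
     level (m * j) - eps <= max_array (fun k n => X k n w) m j}.
Proof.
move=> eps_gt0 integrable_eps.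
have [K [N0 decay]] := all_below_prob_decay eps_gt0 integrable_eps.
have mD m j : measurable (all_below eps m j).
  apply: fin_bigcap_measurable; first exact: finite_seq.
  by move=> i _; exact: measurable_funPTI (measurable_itv _).
apply: filterS (double_array_borel_cantelli mD decay) => w [M notD].
exists M => m j m0 j0 Mmj; rewrite leNgt; apply/negP => max_lt.
apply: (notD m j m0 j0 Mmj) => -[k n] /=; rewrite mem_rect => /andP[km nj].
by rewrite in_itv /=; exact: le_lt_trans (le_max_array _ km nj) max_lt.
Qed.

End lower_bound.
Theorem theorem2 (R : realType) (d : measure_display) (Omega : measurableType d)
  (P : probability Omega R) (phi p : R -> R)
  (X : nat -> nat -> {RV P >-> R}) (g kappa C0 : R -> R) (C : R) :
  orlicz_N phi ->
  is_density phi p ->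
  mutually_independent P [set kn : nat * nat | (0 < kn.1)%N /\ (0 < kn.2)%N]
    (fun kn => X kn.1 kn.2 : Omega -> R) ->
  (forall k n, (0 < k)%N -> (0 < n)%N -> phi_subgaussian P phi (X k n)) ->
  (forall x, 0 <= x -> 0 < g x) ->
  (forall x y, 0 <= x -> x <= y -> g x <= g y) ->
  (forall k n, (0 < k)%N -> (0 < n)%N ->
     tau_phi P phi (X k n) <= g (ln (k * n)%:R)) ->
  (forall x, 0 < x -> 0 < kappa x) ->
  (forall x y, 0 < x -> x < y -> kappa x < kappa y) ->
  (forall x, 0 < x -> derivable kappa x 1) ->
  (forall x y, 0 < x -> x <= y -> derive1 kappa x <= derive1 kappa y) ->
  0 < C ->
  (forall k n, (0 < k)%N -> (0 < n)%N -> forall x, 0 < x ->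
     (P [set w | (X k n w / g (ln (k * n)%:R) < x)%R]
        <= (expR (- (C * expR (- kappa x))))%:E)%E) ->
  (forall x, 0 < x ->
     C0 x <= young_fenchel phi x - kappa (x * g x / g 0)) ->
  (exists A eps0, 0 < A /\ 0 < eps0 /\
     forall eps, 0 < eps -> eps <= eps0 ->
       lebesgue_measure.-integrable `[A, +oo[
         (fun y => (expR (- (C * y / 2 *
            expR (- kappa (g (ln y) / g 0
                           * inv_on_nonneg (young_fenchel phi) (ln y)
                           - eps / g (ln y))))))%:E)
       /\
       lebesgue_measure.-integrable `[A, +oo[
         (fun y => (young_fenchel phi y * gen_inv p y *
            expR (young_fenchel phi y - C / 2 *
              expR (C0 y + eps * derive1 kappa
                      (y * g (young_fenchel phi y) / g 0
                       - eps / g (young_fenchel phi y))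
                    / g (young_fenchel phi y))))%:E)) ->
  {ae P, forall w,
     lim_max_to (fun m j =>
       Num.max (- (max_array (fun k n => X k n w) m j
                   - g (ln (m * j)%:R)
                     * inv_on_nonneg (young_fenchel phi) (ln (m * j)%:R))) 0) 0}.
Proof.
move=> phiN _ X_indep _ g_gt0 g_nondecr _ _ kappa_incr _ _ C_gt0 X_lower_tail _
  [A [eps0 [_ [eps0_gt0 integrable_eps]]]].
pose eps k := eps0 / k.+1%:R.
have eps_gt0 k : 0 < eps k by rewrite divr_gt0 ?ltr0n.
have eps_le k : eps k <= eps0 by rewrite ler_pdivrMr ?ltr0n // ler_peMr ?ler1n // ltW.
have := ae_foralln (fun k => ae_level_sub_le_max_array phiN X_indep g_gt0 g_nondecr
  kappa_incr C_gt0 X_lower_tail (eps_gt0 k) (integrable_eps _ (eps_gt0 k) (eps_le k)).1).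
apply: filterS => w eventually_ge e e_gt0.
have [k eps_lt_e] : exists k, eps k < e.
  pose k := Num.truncn (eps0 / e); exists k.
  rewrite /eps ltr_pdivrMr ?ltr0n // mulrC -ltr_pdivrMr //.
  by have /andP[_] := truncn_itv (ltW (divr_gt0 eps0_gt0 e_gt0)).
have [M ge_M] := eventually_ge k.
exists M => m j m0 j0 Mmj; have := ge_M m j m0 j0 Mmj; rewrite /level.
rewrite subr0 ger0_norm ?le_max ?lexx ?orbT // gt_max e_gt0 andbT.
lra.
Qed.
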